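(* Fix $0<d<1$ and let $c(x)=x^d$. For every positive integer $h$ there exists a game with $n=h^2+h$ jobs and cost function $c$, and a Nash equilibrium $s$ of that game, such that $\frac{C(s)}{C(s^* )}=\Omega\!\left(h^{1-d}\right)=\Omega\!\left(n^{(1-d)/2}\right)$, where $s^*$ is an optimal assignment of that game.
   Context: A game is specified by a cost function $c$ (here $c(x)=x^d$, $c(0)=0$), a time horizon $T$ with slots $t=1,\dots,T$, and a set of jobs, each job $j$ having integer release time $r_j$ and integer deadline $d_j$ with $0<r_j<d_j<T$. An assignment $s$ gives each job $j$ a slot $s_j$ with $r_j\le s_j<d_j$. The load of slot $t$ is $l_t(s)=|\{j:s_j=t\}|$ and $C(s)=\sum_{t=1}^T c(l_t(s))$. An assignment $s$ is a Nash equilibrium if for every job $j$ and every slot $t\neq s_j$ with $r_j\le t<d_j$: $\frac{c(l_{s_j}(s))}{l_{s_j}(s)}\le\frac{c(l_t(s)+1)}{l_t(s)+1}$. An optimal assignment is one minimizing $C$ over all assignments. *)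

From Stdlib Require Import Reals Lra Lia Arith.
Open Scope R_scope.

(* A game: time horizon T (slots 1..T), njobs jobs indexed 0..njobs-1,
   job j has release time rel j and deadline dl j. *)
Record game := Game { horizon : nat; njobs : nat; rel : nat -> nat; dl : nat -> nat }.

Definition well_formed (g : game) : Prop :=
  forall j, (j < njobs g)%nat ->
    (0 < rel g j)%nat /\ (rel g j < dl g j)%nat /\ (dl g j < horizon g)%nat.

Definition cost (d : R) (k : nat) : R :=
  match k with O => 0 | _ => Rpower (INR k) d end.

Definition assignment := nat -> nat.

Definition valid (g : game) (s : assignment) : Prop :=
  forall j, (j < njobs g)%nat -> (rel g j <= s j)%nat /\ (s j < dl g j)%nat.

Fixpoint count_slot (s : assignment) (t : nat) (n : nat) : nat :=
  match n with
  | O => O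
  | S m => (if Nat.eqb (s m) t then 1 else 0) + count_slot s t m
  end%nat.

Definition load (g : game) (s : assignment) (t : nat) : nat :=
  count_slot s t (njobs g).

Fixpoint sum_slots (f : nat -> R) (T : nat) : R :=
  match T with O => 0 | S m => f (S m) + sum_slots f m end.

Definition total_cost (d : R) (g : game) (s : assignment) : R :=
  sum_slots (fun t => cost d (load g s t)) (horizon g).

Definition nash (d : R) (g : game) (s : assignment) : Prop :=
  valid g s /\
  forall j t, (j < njobs g)%nat -> t <> s j ->
    (rel g j <= t)%nat -> (t < dl g j)%nat ->
    cost d (load g s (s j)) / INR (load g s (s j))
      <= cost d (S (load g s t)) / INR (S (load g s t)).

Definition optimal (d : R) (g : game) (s : assignment) : Prop :=
  valid g s /\ forall s', valid g s' -> total_cost d g s <= total_cost d g s'.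

From Stdlib Require Import Reals Lra Lia.
Open Scope R_scope.

(* Jobs come in h levels, the 2k jobs of level k being allowed in slots 1..k+1.
   In the equilibrium every job of level k sits in slot k+1, whose load 2k exceeds
   the load of every earlier slot; since the per-job cost x^(d-1) decreases in the
   load x, no job gains by moving.  All loads are at most 2h, so the equilibrium
   costs at least n (2h)^(d-1), whereas putting all n = h^2+h jobs into slot 1
   costs n^d.  The ratio is therefore at least (n/2h)^(1-d) >= (h/2)^(1-d). *)

Lemma sum_slots_ext f g T : (forall t, (1 <= t <= T)%nat -> f t = g t) ->
  sum_slots f T = sum_slots g T.
Proof.
  induction T as [|T IH]; intros Hfg; simpl; [reflexivity|].
  rewrite Hfg, IH; [reflexivity| |]; intros; try apply Hfg; lia.
Qed.

Lemma sum_slots_le f g T : (forall t, (1 <= t <= T)%nat -> f t <= g t) ->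
  sum_slots f T <= sum_slots g T.
Proof.
  induction T as [|T IH]; intros Hfg; simpl; [lra|].
  apply Rplus_le_compat; [apply Hfg; lia | apply IH; intros; apply Hfg; lia].
Qed.

Lemma sum_slots_plus f g T :
  sum_slots (fun t => f t + g t) T = sum_slots f T + sum_slots g T.
Proof. induction T as [|T IH]; simpl; [lra | rewrite IH; ring]. Qed.

Lemma sum_slots_scal c f T : sum_slots (fun t => c * f t) T = c * sum_slots f T.
Proof. induction T as [|T IH]; simpl; [ring | rewrite IH; ring]. Qed.

Lemma sum_slots_indicator v T : (1 <= v <= T)%nat ->
  sum_slots (fun t => if Nat.eqb v t then 1 else 0) T = 1.
Proof.
  induction T as [|T IH]; intros Hv; simpl; [lia|].
  destruct (Nat.eqb_spec v (S T)) as [->|Hne].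
  - rewrite (sum_slots_ext _ (fun t => 0 * 0)), sum_slots_scal; [ring|].
    intros t Ht; destruct (Nat.eqb_spec (S T) t); [lia | ring].
  - rewrite IH by lia; ring.
Qed.

Lemma count_slot_le s t n : (count_slot s t n <= n)%nat.
Proof. induction n as [|n IH]; simpl; [lia | destruct (Nat.eqb (s n) t); lia]. Qed.

Lemma count_slot_add s t a b :
  count_slot s t (a + b) = (count_slot s t a + count_slot (fun i => s (a + i)) t b)%nat.
Proof.
  induction b as [|b IH]; [rewrite Nat.add_0_r; simpl; lia|].
  rewrite Nat.add_succ_r; simpl; rewrite IH; lia.
Qed.

Lemma count_slot_const s t v n : (forall j, (j < n)%nat -> s j = v) ->
  count_slot s t n = if Nat.eqb v t then n else 0%nat.
Proof.
  induction n as [|n IH]; intros Hs; simpl; [destruct (Nat.eqb v t); reflexivity|].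
  rewrite IH by (intros; apply Hs; lia); rewrite Hs by lia.
  destruct (Nat.eqb v t); lia.
Qed.

Lemma sum_slots_count s T n : (forall j, (j < n)%nat -> (1 <= s j <= T)%nat) ->
  sum_slots (fun t => INR (count_slot s t n)) T = INR n.
Proof.
  induction n as [|n IH]; intros Hs.
  - rewrite (sum_slots_ext _ (fun t => 0 * 0)), sum_slots_scal; [simpl; ring | intros; simpl; ring].
  - rewrite (sum_slots_ext _ (fun t => (if Nat.eqb (s n) t then 1 else 0)
                                      + INR (count_slot s t n))).
    + rewrite sum_slots_plus, sum_slots_indicator, IH, S_INR;
        [ring | intros; apply Hs; lia | apply Hs; lia].
    + intros t _; simpl; rewrite plus_INR; destruct (Nat.eqb (s n) t); simpl; ring.
Qed.

Lemma valid_slot_bounds g s j : well_formed g -> valid g s -> (j < njobs g)%nat ->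
  (1 <= s j <= horizon g)%nat.
Proof. intros Hg Hs Hj; specialize (Hg j Hj); specialize (Hs j Hj); lia. Qed.

Lemma Rpower_pos x e : 0 < Rpower x e.
Proof. apply exp_pos. Qed.

Lemma Rpower_antitone a b e : e <= 0 -> 0 < a <= b -> Rpower b e <= Rpower a e.
Proof.
  intros He Hab; replace e with (- - e) by ring; rewrite (Rpower_Ropp b (- e)), (Rpower_Ropp a (- e)).
  apply Rinv_le_contravar; [apply Rpower_pos | apply Rle_Rpower_l; lra].
Qed.

Lemma cost_per_job d k : (1 <= k)%nat -> cost d k / INR k = Rpower (INR k) (d - 1).
Proof.
  intros Hk; destruct k as [|k]; [lia|].
  assert (Hpos : 0 < INR (S k)) by (apply lt_0_INR; lia).
  unfold cost, Rminus; rewrite Rpower_plus, Rpower_Ropp, Rpower_1 by exact Hpos.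
  reflexivity.
Qed.

Lemma cost_per_job_antitone d k m : d <= 1 -> (1 <= k <= m)%nat ->
  cost d m / INR m <= cost d k / INR k.
Proof.
  intros Hd Hkm; rewrite !cost_per_job by lia.
  apply Rpower_antitone; [lra | split; [apply lt_0_INR | apply le_INR]; lia].
Qed.

Lemma cost_ge_linear d k M : d <= 1 -> (k <= M)%nat ->
  INR k * Rpower (INR M) (d - 1) <= cost d k.
Proof.
  intros Hd HkM; destruct k as [|k]; [simpl; lra|].
  assert (Hpos : 0 < INR (S k)) by (apply lt_0_INR; lia).
  rewrite <- cost_per_job by lia.
  apply Rle_trans with (INR (S k) * (cost d (S k) / INR (S k))).
  - apply Rmult_le_compat_l; [lra | apply cost_per_job_antitone; [exact Hd | lia]].
  - right; field; lra.
Qed.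

Lemma total_cost_ge d g s M : d <= 1 -> well_formed g -> valid g s ->
  (forall t, (load g s t <= M)%nat) ->
  INR (njobs g) * Rpower (INR M) (d - 1) <= total_cost d g s.
Proof.
  intros Hd Hg Hs HM; unfold total_cost.
  rewrite <- (sum_slots_count s (horizon g) (njobs g))
    by (intros; apply valid_slot_bounds; assumption).
  rewrite Rmult_comm, <- sum_slots_scal.
  apply sum_slots_le; intros t _; rewrite Rmult_comm; apply cost_ge_linear; auto.
Qed.

Lemma total_cost_pos d g s : d <= 1 -> well_formed g -> valid g s -> (0 < njobs g)%nat ->
  0 < total_cost d g s.
Proof.
  intros Hd Hg Hs Hn.
  apply Rlt_le_trans with (2 := total_cost_ge d g s (njobs g) Hd Hg Hs (fun t => count_slot_le s t _)).
  apply Rmult_lt_0_compat; [apply lt_0_INR; exact Hn | apply Rpower_pos].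
Qed.

Lemma total_cost_single_slot d g s t0 : (1 <= t0 <= horizon g)%nat ->
  (forall j, (j < njobs g)%nat -> s j = t0) -> total_cost d g s = cost d (njobs g).
Proof.
  intros Ht0 Hs; unfold total_cost, load.
  rewrite (sum_slots_ext _ (fun t => cost d (njobs g) * (if Nat.eqb t0 t then 1 else 0))).
  - rewrite sum_slots_scal, sum_slots_indicator by exact Ht0; ring.
  - intros t _; rewrite (count_slot_const s t t0) by exact Hs.
    destruct (Nat.eqb t0 t); simpl; ring.
Qed.

Lemma nash_of_increasing_loads d g s : d <= 1 -> valid g s ->
  (forall j t, (j < njobs g)%nat -> t <> s j -> (rel g j <= t)%nat -> (t < dl g j)%nat ->
     (load g s t < load g s (s j))%nat) ->
  nash d g s.
Proof.
  intros Hd Hs Hlt; split; [exact Hs|].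
  intros j t Hj Ht Hr Hdl; apply cost_per_job_antitone; [exact Hd|].
  specialize (Hlt j t Hj Ht Hr Hdl); lia.
Qed.

Lemma poa_lower_bound d n M Cs Copt : 0 < n -> 0 < M ->
  n * Rpower M (d - 1) <= Cs -> 0 < Copt <= Rpower n d ->
  Rpower (n / M) (1 - d) <= Cs / Copt.
Proof.
  intros Hn HM HCs HCopt.
  assert (Hsplit : Rpower (n / M) (1 - d) = n * Rpower M (d - 1) / Rpower n d).
  { unfold Rpower, Rdiv; rewrite ln_mult, ln_Rinv by (auto; apply Rinv_0_lt_compat; auto).
    rewrite <- (exp_ln n) at 2 by exact Hn.
    rewrite <- exp_Ropp, <- !exp_plus; f_equal; ring. }
  rewrite Hsplit; unfold Rdiv.
  apply Rle_trans with (Cs * / Rpower n d).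
  - apply Rmult_le_compat_r; [left; apply Rinv_0_lt_compat, Rpower_pos | exact HCs].
  - apply Rmult_le_compat_l; [| apply Rinv_le_contravar; lra].
    apply Rle_trans with (2 := HCs); left; apply Rmult_lt_0_compat; [exact Hn | apply Rpower_pos].
Qed.

(* Jobs are numbered block by block: indices k(k-1) .. k(k+1)-1 are the 2k jobs of level k. *)
Fixpoint level (j : nat) : nat :=
  match j with
  | O => 1
  | S i => if Nat.eqb (S i) (level i * S (level i)) then S (level i) else level i
  end.

Lemma level_spec j : (1 <= level j /\ level j * (level j - 1) <= j < level j * S (level j))%nat.
Proof.
  induction j as [|i IH]; [simpl; lia|]; cbn [level].
  destruct (Nat.eqb_spec (S i) (level i * S (level i))); nia.
Qed.

Lemma level_unique j k : (k * (k - 1) <= j < k * S k)%nat -> level j = k.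
Proof.
  intros Hk; destruct (level_spec j) as (H1 & H2 & H3).
  destruct (Nat.lt_total (level j) k) as [Hlt | [Heq | Hgt]]; [| exact Heq |].
  - assert (level j * S (level j) <= (k - 1) * k)%nat by (apply Nat.mul_le_mono; lia); nia.
  - assert (S k * k <= level j * (level j - 1))%nat by (apply Nat.mul_le_mono; lia); nia.
Qed.

Definition tri_game (h : nat) : game :=
  Game (h + 3) (h * h + h) (fun _ => 1%nat) (fun j => (level j + 2)%nat).

Definition tri_eq : assignment := fun j => S (level j).

Lemma count_tri_eq k t : count_slot tri_eq t (k * S k) =
  if andb (Nat.leb 2 t) (Nat.leb t (S k)) then (2 * (t - 1))%nat else 0%nat.
Proof.
  induction k as [|k IH]; [destruct t as [|[|t]]; reflexivity|].
  replace (S k * S (S k))%nat with (k * S k + 2 * S k)%nat by nia.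
  rewrite count_slot_add, IH, (count_slot_const _ t (S (S k))).
  2: { intros i Hi; unfold tri_eq; f_equal; apply level_unique; nia. }
  destruct (Nat.leb_spec 2 t), (Nat.leb_spec t (S k)), (Nat.leb_spec t (S (S k))),
    (Nat.eqb_spec (S (S k)) t); simpl; lia.
Qed.

Lemma level_le j h : (j < h * S h)%nat -> (level j <= h)%nat.
Proof.
  intros Hj; destruct (level_spec j) as (H1 & H2 & H3).
  destruct (Nat.le_gt_cases (level j) h) as [Hle | Hgt]; [exact Hle|].
  assert (S h * h <= level j * (level j - 1))%nat by (apply Nat.mul_le_mono; lia); nia.
Qed.

Lemma tri_load h t : load (tri_game h) tri_eq t =
  if andb (Nat.leb 2 t) (Nat.leb t (S h)) then (2 * (t - 1))%nat else 0%nat.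
Proof.
  unfold load; cbn [tri_game njobs].
  replace (h * h + h)%nat with (h * S h)%nat by lia; apply count_tri_eq.
Qed.

Lemma tri_load_bound h t : (load (tri_game h) tri_eq t <= 2 * Nat.min (t - 1) h)%nat.
Proof.
  rewrite tri_load; destruct (Nat.leb_spec 2 t), (Nat.leb_spec t (S h)); simpl; lia.
Qed.

Lemma tri_level_le h j : (j < njobs (tri_game h))%nat -> (1 <= level j <= h)%nat.
Proof.
  cbn [tri_game njobs]; intros Hj; split; [apply level_spec | apply level_le; lia].
Qed.

Lemma tri_load_level h j : (j < njobs (tri_game h))%nat ->
  load (tri_game h) tri_eq (tri_eq j) = (2 * level j)%nat.
Proof.
  intros Hj; pose proof (tri_level_le h j Hj); rewrite tri_load; unfold tri_eq.
  destruct (Nat.leb_spec 2 (S (level j))), (Nat.leb_spec (S (level j)) (S h)); simpl; lia.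
Qed.

Lemma tri_well_formed h : well_formed (tri_game h).
Proof. intros j Hj; pose proof (tri_level_le h j Hj); cbn [tri_game rel dl horizon]; lia. Qed.

Lemma tri_eq_valid h : valid (tri_game h) tri_eq.
Proof. intros j Hj; cbn [tri_game rel dl]; unfold tri_eq; lia. Qed.

Lemma tri_eq_nash d h : d <= 1 -> nash d (tri_game h) tri_eq.
Proof.
  intros Hd; apply nash_of_increasing_loads; [exact Hd | apply tri_eq_valid|].
  intros j t Hj Ht _ Hdl; cbn [tri_game dl] in Hdl; unfold tri_eq in Ht.
  rewrite tri_load_level by exact Hj.
  pose proof (tri_level_le h j Hj); pose proof (tri_load_bound h t); lia.
Qed.

Lemma tri_eq_cost_ge d h : d <= 1 ->
  INR (h * h + h) * Rpower (INR (2 * h)) (d - 1) <= total_cost d (tri_game h) tri_eq.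
Proof.
  intros Hd; apply (total_cost_ge d (tri_game h) tri_eq (2 * h) Hd).
  - apply tri_well_formed.
  - apply tri_eq_valid.
  - intros t; pose proof (tri_load_bound h t); lia.
Qed.

Lemma tri_opt_cost_le d h s : (1 <= h)%nat -> optimal d (tri_game h) s ->
  total_cost d (tri_game h) s <= Rpower (INR (h * h + h)) d.
Proof.
  intros Hh [_ Hopt].
  assert (Hfirst : valid (tri_game h) (fun _ => 1%nat)).
  { intros j Hj; pose proof (tri_level_le h j Hj); cbn [tri_game rel dl]; lia. }
  eapply Rle_trans; [apply (Hopt _ Hfirst)|].
  rewrite (total_cost_single_slot d _ _ 1); [| cbn [tri_game horizon]; lia | reflexivity].
  cbn [tri_game njobs]; destruct (h * h + h)%nat eqn:En; [lia | apply Rle_refl].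
Qed.

Theorem lemma2 (d : R) (Hd : 0 < d < 1) :
  exists K : R, 0 < K /\
    forall h : nat, (1 <= h)%nat ->
      exists (g : game) (s : assignment),
        well_formed g /\ njobs g = (h * h + h)%nat /\ nash d g s /\
        forall s' : assignment, optimal d g s' ->
          total_cost d g s / total_cost d g s' >= K * Rpower (INR h) (1 - d).
Proof.
  exists (Rpower (/ 2) (1 - d)); split; [apply Rpower_pos|].
  intros h Hh; exists (tri_game h), tri_eq.
  split; [apply tri_well_formed|]; split; [reflexivity|]; split; [apply tri_eq_nash; lra|].
  intros s' Hopt; apply Rle_ge.
  assert (Hh0 : 0 < INR h) by (apply lt_0_INR; lia).
  assert (Hn : INR (h * h + h) / INR (2 * h) = (INR h + 1) / 2).
  { rewrite plus_INR, !mult_INR; replace (INR 2) with 2 by (simpl; ring); field; lra. }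
  rewrite Rpower_mult_distr by lra.
  apply Rle_trans with (Rpower (INR (h * h + h) / INR (2 * h)) (1 - d)).
  - rewrite Hn; apply Rle_Rpower_l; lra.
  - apply poa_lower_bound.
    + apply lt_0_INR; nia.
    + apply lt_0_INR; lia.
    + apply tri_eq_cost_ge; lra.
    + split; [| apply tri_opt_cost_le; assumption].
      apply total_cost_pos; [lra | apply tri_well_formed | apply Hopt | cbn; nia].
Qed.
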